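(* Let $n\ge 1$ and $d\ge 1$ be integers, let $\mathcal{X}\subset\mathbb{R}^d$ be compact and convex, let $\mathbf{x}_0\in\mathcal{X}$, let $w_0,w_1,\dots,w_n\in\mathbb{R}$, and let $\mathbf{t}_1,\dots,\mathbf{t}_n\in\mathbb{R}^d$. Consider the $n$-player game $G$ in which player $i\in[n]$ chooses $\mathbf{x}_i\in\mathcal{X}$ and incurs the loss $\ell_i(\mathbf{x}_1,\dots,\mathbf{x}_n)=\|w_0\mathbf{x}_0+\sum_{j=1}^n w_j\mathbf{x}_j-\mathbf{t}_i\|_2^2$. Then $G$ has either exactly one pure Nash equilibrium or infinitely many pure Nash equilibria.
   Context: A pure Nash equilibrium of $G$ is a profile $\mathbf{x}=(\mathbf{x}_1,\dots,\mathbf{x}_n)\in\mathcal{X}^n$ such that $\ell_i(\mathbf{x}_i,\mathbf{x}_{-i})\le\ell_i(\mathbf{y},\mathbf{x}_{-i})$ for all $\mathbf{y}\in\mathcal{X}$ and all $i\in[n]$, where $(\mathbf{y},\mathbf{x}_{-i})$ denotes the profile with player $i$'s action replaced by $\mathbf{y}$. *)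

From HB Require Import structures.
From mathcomp Require Import all_boot all_order all_algebra.
From mathcomp Require Import all_classical all_reals all_analysis.
Set Implicit Arguments. Unset Strict Implicit. Unset Printing Implicit Defensive.
Import Order.TTheory GRing.Theory Num.Theory numFieldNormedType.Exports.
Local Open Scope classical_set_scope.
Local Open Scope ring_scope.

Definition sqnorm (R : realType) (d : nat) (v : 'rV[R]_d) : R :=
  \sum_(k < d) (v ord0 k) ^+ 2.

Definition upd (R : realType) (d n : nat) (x : {ffun 'I_n -> 'rV[R]_d})
  (i : 'I_n) (y : 'rV[R]_d) : {ffun 'I_n -> 'rV[R]_d} :=
  [ffun j => if j == i then y else x j].

(* Loss of player i (players indexed by 'I_n, i.e. 0..n-1 for 1..n):
   || w0 x0 + sum_j w_j x_j - t_i ||_2^2 *)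
Definition loss (R : realType) (d n : nat) (w0 : R) (x0 : 'rV[R]_d)
  (w : 'I_n -> R) (t : 'I_n -> 'rV[R]_d) (i : 'I_n)
  (x : {ffun 'I_n -> 'rV[R]_d}) : R :=
  sqnorm (w0 *: x0 + \sum_(j < n) w j *: x j - t i).

Definition pure_NE (R : realType) (d n : nat) (X : set 'rV[R]_d) (w0 : R)
  (x0 : 'rV[R]_d) (w : 'I_n -> R) (t : 'I_n -> 'rV[R]_d)
  : set {ffun 'I_n -> 'rV[R]_d} :=
  [set x : {ffun 'I_n -> 'rV[R]_d} | (forall i, X (x i)) /\
           forall i y, X y -> loss w0 x0 w t i x <= loss w0 x0 w t i (upd x i y)].

From HB Require Import structures.
From mathcomp Require Import all_boot all_order all_algebra.
From mathcomp Require Import all_classical all_reals all_analysis.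
From mathcomp Require Import ring lra.
Set Implicit Arguments. Unset Strict Implicit. Unset Printing Implicit Defensive.
Import Order.TTheory GRing.Theory Num.Theory numFieldNormedType.Exports.
Local Open Scope classical_set_scope.
Local Open Scope ring_scope.
Import ArrowAsProduct.

(* With the aggregate s(x) = w0 x0 + sum_j w_j x_j, the game has the exact
   potential Phi(x) = |s(x)|^2 - 2 sum_j w_j <x_j, t_j>: a deviation of player i
   from x_i to y changes both Phi and the loss of i by
   2 w_i <s(x) - t_i, y - x_i> + w_i^2 |y - x_i|^2.  A minimiser of Phi on the
   compact set X^n is hence an equilibrium.  As X is convex, x is an
   equilibrium iff each first-order term w_i <s(x) - t_i, y - x_i> is
   nonnegative on X; summing these inequalities for two equilibria a, b with
   the roles of a and b swapped gives -|s(a) - s(b)|^2 >= 0, so all equilibria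
   have the same aggregate.  Once s is fixed the first-order conditions are
   affine in x, so the equilibria form a convex set: a point or infinitely many
   points. *)

Lemma convex_set_conv (R : numDomainType) (M : lmodType R) (A : set M) :
  convex_set A -> forall a b (p : {i01 R}), A a -> A b ->
  A (p%:num *: a + (1 - p%:num) *: b).
Proof. by move=> cA a b p Aa Ab; apply/set_mem/cA; apply/mem_set. Qed.

Lemma line_inj (F : fieldType) (V : lmodType F) (a b : V) :
  a != b -> injective (fun p : F => p *: a + (1 - p) *: b).
Proof.
move=> ab p q; have lineE r : r *: a + (1 - r) *: b = r *: (a - b) + b.
  by rewrite scalerBl scale1r scalerBr addrCA addrC.
rewrite !lineE => /addIr/eqP; rewrite -subr_eq0 -scalerBl scaler_eq0.
by rewrite !subr_eq0 (negPf ab) orbF => /eqP.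
Qed.

Lemma slope_ge0_of_quad (R : realFieldType) (g h : R) :
  (forall e, 0 < e -> e <= 1 -> 0 <= 2 * e * g + e ^+ 2 * h) -> 0 <= g.
Proof.
move=> H; rewrite leNgt; apply/negP => g_neg.
have hg : 0 < `|h| - g by have := normr_ge0 h; lra.
pose e := - g / (`|h| - g).
have e0 : 0 < e by rewrite divr_gt0 // oppr_gt0.
have e1 : e <= 1 by rewrite ler_pdivrMr // mul1r; have := normr_ge0 h; lra.
have eh : e * `|h| = e * g - g.
  have : e * (`|h| - g) = - g by rewrite mulfVK // gt_eqF.
  by rewrite mulrBr; lra.
have : e ^+ 2 * h <= e * (e * g - g).
  by rewrite -eh expr2 -mulrA !(ler_pM2l e0) ler_norm.
have : e * g * (1 + e) < 0 by rewrite nmulr_rlt0 ?pmulr_rlt0 //; lra.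
have := H e e0 e1; lra.
Qed.

Lemma convex_set_infinite (R : numFieldType) (M : lmodType R) (A : set M)
    (a b : M) :
  convex_set A -> A a -> A b -> a != b -> infinite_set A.
Proof.
move=> cA Aa Ab ab; apply/infiniteP.
have inv_ge0 k : 0 <= (k.+1%:R : R)^-1 by rewrite invr_ge0 ler0n.
have inv_le1 k : (k.+1%:R : R)^-1 <= 1 by rewrite invf_le1 ?ltr0Sn // ler1n.
pose lam k : {i01 R} := Itv01 (inv_ge0 k) (inv_le1 k).
suff [F] : $|{injfun [set: nat] >-> A}| by exact: inj_card_le F.
apply/injfunPex; exists (fun k => (lam k)%:num *: a + (1 - (lam k)%:num) *: b).
  by move=> k _; exact: convex_set_conv.
move=> k l _ _.
by move/(line_inj ab)/invr_inj/eqP; rewrite eqr_nat => /eqP[].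
Qed.

Section continuous_fun.
Context (T : topologicalType) (R : realType).
Implicit Types f g : T -> R.

Lemma continuous_funD f g :
  continuous f -> continuous g -> continuous (fun x => f x + g x).
Proof. by move=> cf cg x; apply: continuousD; [exact: cf | exact: cg]. Qed.

Lemma continuous_funB f g :
  continuous f -> continuous g -> continuous (fun x => f x - g x).
Proof. by move=> cf cg x; apply: continuousB; [exact: cf | exact: cg]. Qed.

Lemma continuous_funM f g :
  continuous f -> continuous g -> continuous (fun x => f x * g x).
Proof. by move=> cf cg x; apply: continuousM; [exact: cf | exact: cg]. Qed.

Lemma continuous_fun_sum (I : Type) (r : seq I) (P : pred I) (F : I -> T -> R) :
  (forall i, continuous (F i)) ->
  continuous (fun x => \sum_(i <- r | P i) F i x).
Proof.
move=> cF; elim: r => [|i r IHr] x.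
  under eq_fun do rewrite big_nil.
  exact: cst_continuous.
under eq_fun do rewrite big_cons.
by case: (P i) => /=; [apply: continuous_funD | apply: IHr].
Qed.

End continuous_fun.

Section Game.
Variables (R : realType) (n d : nat) (w0 : R) (x0 : 'rV[R]_d).
Variables (w : 'I_n -> R) (t : 'I_n -> 'rV[R]_d).

Definition aggregate (x : 'I_n -> 'rV[R]_d) (k : 'I_d) : R :=
  w0 * x0 ord0 k + \sum_(j < n) w j * x j ord0 k.

Definition dev_slope (i : 'I_n) (x : 'I_n -> 'rV[R]_d) (y : 'rV[R]_d) : R :=
  w i * \sum_(k < d) (aggregate x k - t i ord0 k) * (y ord0 k - x i ord0 k).

Definition dev_curv (i : 'I_n) (x : 'I_n -> 'rV[R]_d) (y : 'rV[R]_d) : R :=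
  w i ^+ 2 * \sum_(k < d) (y ord0 k - x i ord0 k) ^+ 2.

Definition potential (x : 'I_n -> 'rV[R]_d) : R :=
  \sum_(k < d) aggregate x k ^+ 2 -
  2 * \sum_(j < n) w j * \sum_(k < d) x j ord0 k * t j ord0 k.

Local Notation loss := (loss w0 x0 w t).

Lemma lossE i (x : {ffun 'I_n -> 'rV[R]_d}) :
  loss i x = \sum_(k < d) (aggregate x k - t i ord0 k) ^+ 2.
Proof.
apply: eq_bigr => k _; rewrite !mxE summxE.
by under eq_bigr do rewrite mxE.
Qed.

Lemma updE (x : {ffun 'I_n -> 'rV[R]_d}) i y j :
  upd x i y j = if j == i then y else x j.
Proof. exact: ffunE. Qed.

Lemma big_upd (V : zmodType) (F : 'I_n -> 'rV[R]_d -> V) x i y :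
  \sum_(j < n) F j (upd x i y j) = \sum_(j < n) F j (x j) + (F i y - F i (x i)).
Proof.
rewrite (bigD1 i) // [in RHS](bigD1 i) //= updE eqxx.
under eq_bigr => j /negPf ji do rewrite updE ji.
by rewrite [in RHS]addrAC [F i (x i) + _]addrC subrK.
Qed.

Lemma aggregate_upd x i y k :
  aggregate (upd x i y) k = aggregate x k + w i * (y ord0 k - x i ord0 k).
Proof.
rewrite /aggregate (big_upd (fun j v => w j * v ord0 k)) mulrBr; ring.
Qed.

Lemma loss_upd x i y :
  loss i (upd x i y) = loss i x + 2 * dev_slope i x y + dev_curv i x y.
Proof.
rewrite !lossE /dev_slope /dev_curv; under eq_bigr do rewrite aggregate_upd.
by rewrite !mulr_sumr -!big_split /=; apply: eq_bigr => k _; ring.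
Qed.

Lemma potential_upd x i y :
  potential (upd x i y) = potential x + 2 * dev_slope i x y + dev_curv i x y.
Proof.
have pairing_upd : \sum_(j < n) w j * \sum_(k < d) upd x i y j ord0 k * t j ord0 k
    = \sum_(j < n) w j * \sum_(k < d) x j ord0 k * t j ord0 k
      + w i * \sum_(k < d) (y ord0 k - x i ord0 k) * t i ord0 k.
  rewrite (big_upd (fun j v => w j * \sum_(k < d) v ord0 k * t j ord0 k)).
  rewrite -mulrBr -sumrB; congr (_ + _ * _).
  by apply: eq_bigr => k _; rewrite mulrBl.
have squares_upd : \sum_(k < d) aggregate (upd x i y) k ^+ 2
    = \sum_(k < d) aggregate x k ^+ 2 + 2 * dev_slope i x y + dev_curv i x y
      + 2 * (w i * \sum_(k < d) (y ord0 k - x i ord0 k) * t i ord0 k).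
  rewrite /dev_slope /dev_curv; under eq_bigr do rewrite aggregate_upd.
  by rewrite !mulr_sumr -!big_split /=; apply: eq_bigr => k _; ring.
by rewrite /potential pairing_upd squares_upd; ring.
Qed.

Lemma dev_curv_ge0 i x y : 0 <= dev_curv i x y.
Proof. by rewrite mulr_ge0 ?sqr_ge0 // sumr_ge0 // => k _; rewrite sqr_ge0. Qed.

Lemma dev_slope_conv i x y e :
  dev_slope i x (e *: y + (1 - e) *: x i) = e * dev_slope i x y.
Proof.
rewrite /dev_slope [RHS]mulrCA [in RHS]mulr_sumr; congr (_ * _).
by apply: eq_bigr => k _; rewrite !mxE; ring.
Qed.

Lemma dev_curv_conv i x y e :
  dev_curv i x (e *: y + (1 - e) *: x i) = e ^+ 2 * dev_curv i x y.
Proof.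
rewrite /dev_curv [RHS]mulrCA [in RHS]mulr_sumr; congr (_ * _).
by apply: eq_bigr => k _; rewrite !mxE; ring.
Qed.

Lemma aggregate_conv (a b : {ffun 'I_n -> 'rV[R]_d}) p k :
  aggregate (p *: a + (1 - p) *: b) k =
  p * aggregate a k + (1 - p) * aggregate b k.
Proof.
rewrite /aggregate !mulrDr !mulr_sumr addrACA -big_split /=; congr (_ + _).
  by ring.
by apply: eq_bigr => j _; rewrite !ffunE !mxE; ring.
Qed.

Lemma sum_dev_slope_swap a b :
  \sum_(i < n) (dev_slope i a (b i) + dev_slope i b (a i)) =
  - \sum_(k < d) (aggregate a k - aggregate b k) ^+ 2.
Proof.
rewrite /dev_slope -sumrN.
under eq_bigr do rewrite !mulr_sumr -big_split /=.
rewrite exchange_big /=; apply: eq_bigr => k _.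
have aggregateB : aggregate b k - aggregate a k =
    \sum_(i < n) w i * (b i ord0 k - a i ord0 k).
  rewrite /aggregate opprD addrACA subrr add0r -sumrB.
  by apply: eq_bigr => i _; rewrite mulrBr.
rewrite -[RHS]mulNr opprB aggregateB mulr_suml.
by apply: eq_bigr => i _; ring.
Qed.

Variable X : set 'rV[R]_d.
Hypothesis X_convex : convex_set X.
Local Notation NE := (pure_NE X w0 x0 w t).

Lemma pure_NEP x :
  NE x <-> (forall i, X (x i)) /\ (forall i y, X y -> 0 <= dev_slope i x y).
Proof.
split=> -[Xx NEx]; split=> // i y Xy; last first.
  by rewrite loss_upd; have := NEx i y Xy; have := dev_curv_ge0 i x y; lra.
apply: slope_ge0_of_quad (dev_curv i x y) _ => e e0 e1.
have := NEx i _ (convex_set_conv X_convex (Itv01 (ltW e0) e1) Xy (Xx i)).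
by rewrite loss_upd /= dev_slope_conv dev_curv_conv; lra.
Qed.

Lemma pure_NE_aggregate a b : NE a -> NE b -> aggregate a =1 aggregate b.
Proof.
move=> /pure_NEP[Xa NEa] /pure_NEP[Xb NEb] k.
have sq0 : \sum_(k < d) (aggregate a k - aggregate b k) ^+ 2 = 0.
  apply/eqP; rewrite eq_le sumr_ge0 ?andbT => [|j _]; last exact: sqr_ge0.
  rewrite -oppr_ge0 -sum_dev_slope_swap.
  by apply: sumr_ge0 => i _; rewrite addr_ge0 ?NEa ?NEb.
apply/eqP; rewrite -subr_eq0 -sqrf_eq0; apply/eqP.
by move/psumr_eq0P: sq0 => ->// j _; rewrite sqr_ge0.
Qed.

Lemma pure_NE_convex : convex_set NE.
Proof.
move=> a b p /set_mem NEa /set_mem NEb; apply/mem_set.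
have agg_ab := pure_NE_aggregate NEa NEb.
have /pure_NEP[Xa slope_a] := NEa; have /pure_NEP[Xb slope_b] := NEb.
apply/pure_NEP; split=> [i | i y Xy].
  by rewrite !ffunE; apply: convex_set_conv.
have -> : dev_slope i (p%:num *: a + (1 - p%:num) *: b) y =
    p%:num * dev_slope i a y + (1 - p%:num) * dev_slope i b y.
  rewrite /dev_slope mulrCA [(1 - _) * _]mulrCA -mulrDr.
  congr (_ * _); rewrite !mulr_sumr -big_split /=; apply: eq_bigr => k _.
  by rewrite aggregate_conv -agg_ab !ffunE !mxE; ring.
by apply: addr_ge0; apply: mulr_ge0; rewrite ?slope_a ?slope_b ?subr_ge0.
Qed.

(* A dependent product, so that [ArrowAsProduct] gives it the product topology. *)
Local Notation profile_space := (forall i : 'I_n, (fun=> 'rV[R]_d) i).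

Lemma coord_continuous_profile j k :
  continuous (fun x : profile_space => x j ord0 k).
Proof.
move=> x; have := continuous_comp (@proj_continuous _ _ j x)
  (@coord_continuous R 1 d ord0 k _).
by [].
Qed.

Lemma aggregate_continuous k :
  continuous (fun x : profile_space => aggregate x k).
Proof.
apply: continuous_funD; first exact: cst_continuous.
apply: continuous_fun_sum => j; apply: continuous_funM.
  exact: cst_continuous.
exact: coord_continuous_profile.
Qed.

Lemma potential_continuous : continuous (potential : profile_space -> R).
Proof.
apply: continuous_funB.
  apply: continuous_fun_sum => k.
  by apply: continuous_funM; apply: aggregate_continuous.
apply: continuous_funM; first exact: cst_continuous.
apply: continuous_fun_sum => j.
apply: continuous_funM; first exact: cst_continuous.
apply: continuous_fun_sum => k.
apply: continuous_funM; last exact: cst_continuous.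
exact: coord_continuous_profile.
Qed.

Lemma pure_NE_exists : compact X -> X !=set0 -> exists x, NE x.
Proof.
move=> X_compact [y Xy].
pose K := [set x : profile_space | forall i, X (x i)].
have K_compact : compact K by exact: tychonoff (fun=> X_compact).
have K0 : K !=set0 by exists (fun=> y).
have [m /set_mem Km m_min] :=
  compact_EVT_min K0 K_compact (continuous_subspaceT potential_continuous).
exists [ffun i => m i]; split=> [i | i z Xz]; first by rewrite ffunE.
set x := [ffun i => m i].
have : potential x <= potential (upd x i z).
  have -> : potential x = potential m.
    by congr potential; apply/funext => j; rewrite ffunE.
  by apply/m_min/mem_set => j; rewrite updE; case: eqP => // _; rewrite ffunE.
by rewrite potential_upd loss_upd; lra.
Qed.

End Game.

Theorem corollary1 (R : realType) (n d : nat) (hn : (0 < n)%N) (hd : (0 < d)%N)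
  (X : set 'rV[R]_d) (hXc : compact X) (hXv : convex_set X)
  (x0 : 'rV[R]_d) (hx0 : X x0) (w0 : R) (w : 'I_n -> R) (t : 'I_n -> 'rV[R]_d) :
  (exists x, pure_NE X w0 x0 w t = [set x]) \/ infinite_set (pure_NE X w0 x0 w t).
Proof.
have [m NEm] : exists m, pure_NE X w0 x0 w t m.
  by apply: pure_NE_exists; last exists x0.
have [[b NEb bm] | no_other] :=
  pselect (exists2 b, pure_NE X w0 x0 w t b & b != m).
  by right; exact: convex_set_infinite (pure_NE_convex hXv) NEb NEm bm.
left; exists m; apply/seteqP; split=> [x NEx | x ->] //=.
by apply: contra_notP no_other => xm; exists x => //; apply/eqP.
Qed.
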